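(* Let $X=\begin{pmatrix}0&u\sqrt\epsilon\\ v\sqrt\epsilon&0\end{pmatrix}$ with $u,v\in F$, $\nu(u)=0$ and $\nu(v)>0$. Let $s>0$ and $k\in\mathcal{K}$. Then $k^{-1}Xk\in X+\mathfrak{k}_s$ if and only if $k=cg$ for some $c\in T(X)$ and $g\in\mathcal{K}_s$.
   Context: $F$ non-archimedean local field, $p\neq2$, uniformiser $\varpi$, valuation $\nu$; $E=F[\sqrt\epsilon]$ unramified quadratic ($\epsilon\in\mathcal{O}_F^\times$ non-square). $G=\mathbb{U}(1,1)(F)$ (hermitian form $\mathrm{w}=\begin{pmatrix}0&1\\1&0\end{pmatrix}$), $\mathcal{K}=G\cap M_2(\mathcal{O}_E)$ with filtration $\mathcal{K}_n=\begin{pmatrix}1+\mathfrak{p}_E^n&\mathfrak{p}_E^n\\ \mathfrak{p}_E^n&1+\mathfrak{p}_E^n\end{pmatrix}\cap G$ ($\mathcal{K}_s:=\mathcal{K}_{\lceil s\rceil}$) and Lie algebra filtration $\mathfrak{k}_r=\begin{pmatrix}\mathfrak{p}_E^{\lceil r\rceil}&\sqrt\epsilon\mathfrak{p}_F^{\lceil r\rceil}\\ \sqrt\epsilon\mathfrak{p}_F^{\lceil r\rceil}&\mathfrak{p}_E^{\lceil r\rceil}\end{pmatrix}\cap\mathfrak{k}$. $T(X)$ is the centralizer of $X$ in $\mathcal{K}$, namely $\left\{\begin{pmatrix}a&b\\ bu^{-1}v&a\end{pmatrix}: a,b\in\mathcal{O}_E,\ a\overline{a}+b\overline{b}u^{-1}v=1,\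 \overline{a}b\in\sqrt\epsilon\mathcal{O}_F\right\}$. *)

From HB Require Import structures.
From mathcomp Require Import all_boot all_order all_algebra.
From mathcomp Require Import reals.
Set Implicit Arguments. Unset Strict Implicit. Unset Printing Implicit Defensive.
Import Order.TTheory GRing.Theory Num.Theory.
Local Open Scope ring_scope.

Section Defs.
Variable F : fieldType.
Variable nu : F -> int.  (* normalized valuation; its value at 0 is irrelevant *)

(* x \in p_F^n  (with the convention nu 0 = +oo) *)
Definition in_pF (n : int) (x : F) : Prop := x = 0 \/ n <= nu x.

Definition is_discrete_valuation : Prop :=
  [/\ forall x y, x != 0 -> y != 0 -> nu (x * y) = nu x + nu y,
      forall x y, x != 0 -> y != 0 -> x + y != 0 ->
        Order.min (nu x) (nu y) <= nu (x + y)
    & forall n : int, exists x, x != 0 /\ nu x = n].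

Definition is_complete : Prop :=
  forall a : nat -> F,
    (forall n : int, exists N, forall m k, (N <= m)%N -> (N <= k)%N ->
        in_pF n (a m - a k)) ->
    exists l, forall n : int, exists N, forall m, (N <= m)%N -> in_pF n (a m - l).

Definition finite_residue_field : Prop :=
  exists r : seq F, (forall y, y \in r -> in_pF 0 y) /\
    forall x, in_pF 0 x -> exists2 y, y \in r & in_pF 1 (x - y).

Definition nonarch_local_field_odd : Prop :=
  [/\ is_discrete_valuation, is_complete, finite_residue_field
    & (2%:R : F) != 0 /\ nu 2%:R = 0].

(* E = F[sqrt eps], unramified quadratic: iota : F -> E, se = sqrt eps,
   sigma = the nontrivial Galois automorphism (conjugation) *)
Definition unramified_quadratic (eps : F) (E : fieldType)
  (iota : {rmorphism F -> E}) (se : E) (sigma : {rmorphism E -> E}) : Prop :=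
  [/\ eps != 0 /\ nu eps = 0,
      ~ (exists a : F, a ^+ 2 = eps),
      se ^+ 2 = iota eps,
      forall z : E, exists a b : F, z = iota a + iota b * se
    & (forall a, sigma (iota a) = iota a) /\ sigma se = - se].

Variables (E : fieldType) (iota : {rmorphism F -> E}) (se : E)
  (sigma : {rmorphism E -> E}).

Definition in_pE (n : int) (z : E) : Prop :=
  exists a b : F, z = iota a + iota b * se /\ in_pF n a /\ in_pF n b.

Definition in_se_pF (n : int) (z : E) : Prop :=
  exists b : F, z = iota b * se /\ in_pF n b.

Definition mx2 (a b c d : E) : 'M[E]_2 :=
  \matrix_(i < 2, j < 2)
    if i == ord0 then (if j == ord0 then a else b) else (if j == ord0 then c else d).

Definition w : 'M[E]_2 := mx2 0 1 1 0.

Definition adj (g : 'M[E]_2) : 'M[E]_2 := (map_mx sigma g)^T.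

Definition inG (g : 'M[E]_2) : Prop := adj g *m w *m g = w.

Definition inK (g : 'M[E]_2) : Prop := inG g /\ forall i j, in_pE 0 (g i j).

Definition inKn (n : int) (g : 'M[E]_2) : Prop :=
  inG g /\ forall i j, in_pE n ((g - 1%:M) i j).

Definition in_liek (Y : 'M[E]_2) : Prop :=
  adj Y *m w + w *m Y = 0 /\ forall i j, in_pE 0 (Y i j).

(* frak k_n (for n = ceil r) *)
Definition in_liekn (n : int) (Y : 'M[E]_2) : Prop :=
  [/\ in_liek Y,
      in_pE n (Y ord0 ord0), in_pE n (Y ord_max ord_max),
      in_se_pF n (Y ord0 ord_max) & in_se_pF n (Y ord_max ord0)].

Definition inT (X c : 'M[E]_2) : Prop := inK c /\ c *m X = X *m c.

End Defs.

From Pilot Require Import Defs.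
From HB Require Import structures.
From mathcomp Require Import all_boot all_order all_algebra.
From mathcomp Require Import reals.
From mathcomp Require Import ring zify.
Set Implicit Arguments. Unset Strict Implicit. Unset Printing Implicit Defensive.
Import Order.TTheory GRing.Theory Num.Theory.
Local Open Scope ring_scope.

(* Write [X = U [[0, 1], [r, 0]]] with [U = u se] a unit of [O_E] and [r = v / u] in [p_F],
   and [k = [[a, b], [c, d]]].  Since [k] is unitary, [k^-1 X k - X] lies in [k_n] exactly when
   [X k - k X] has entries in [p_E^n], i.e. [c = r b] and [d = a] modulo [p_E^n]; the unitarity
   of [k] then gives [N a + r N b = 1] and [Tr (sigma a b) = 0] modulo [p_E^n].  Hensel's lemma
   for square roots in [F] (the residue characteristic is odd) lifts [(a, b)] to an exact
   solution [(A, B)], so that [c = [[A, B], [r B, A]]] lies in [T(X)] and [c^-1 k] in [K_n].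
   Conversely, if [k = c g] then [k^-1 X k - X = g^-1 (X (g - 1) - (g - 1) X)]. *)

Section TwoByTwo.
Variable E : fieldType.
Local Notation mx2 := (@mx2 E).

Lemma ord2P (i : 'I_2) : i = ord0 \/ i = ord_max.
Proof. by case: i => [[|[|//]] ?]; [left | right]; apply: val_inj. Qed.

Lemma mx2E00 a b c d : mx2 a b c d ord0 ord0 = a. Proof. by rewrite mxE. Qed.
Lemma mx2E01 a b c d : mx2 a b c d ord0 ord_max = b. Proof. by rewrite mxE. Qed.
Lemma mx2E10 a b c d : mx2 a b c d ord_max ord0 = c. Proof. by rewrite mxE. Qed.
Lemma mx2E11 a b c d : mx2 a b c d ord_max ord_max = d. Proof. by rewrite mxE. Qed.
Definition mx2E := (mx2E00, mx2E01, mx2E10, mx2E11).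

Lemma mx2_eta (M : 'M[E]_2) :
  M = mx2 (M ord0 ord0) (M ord0 ord_max) (M ord_max ord0) (M ord_max ord_max).
Proof.
by apply/matrixP => i j; case: (ord2P i) => ->; case: (ord2P j) => ->; rewrite mx2E.
Qed.

Lemma mx2_inj a b c d a' b' c' d' :
  mx2 a b c d = mx2 a' b' c' d' -> [/\ a = a', b = b', c = c' & d = d'].
Proof.
move=> e; split; [ have := congr1 (fun M : 'M_2 => M ord0 ord0) e
  | have := congr1 (fun M : 'M_2 => M ord0 ord_max) e
  | have := congr1 (fun M : 'M_2 => M ord_max ord0) e
  | have := congr1 (fun M : 'M_2 => M ord_max ord_max) e ]; by rewrite /= !mx2E.
Qed.

Lemma mx2_mul a b c d a' b' c' d' :
  mx2 a b c d *m mx2 a' b' c' d' =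
  mx2 (a * a' + b * c') (a * b' + b * d') (c * a' + d * c') (c * b' + d * d').
Proof.
apply/matrixP => i j; rewrite !mxE big_ord_recl big_ord1 !mxE.
by case: (ord2P i) => ->; case: (ord2P j) => ->.
Qed.

Lemma mx2_add a b c d a' b' c' d' :
  mx2 a b c d + mx2 a' b' c' d' = mx2 (a + a') (b + b') (c + c') (d + d').
Proof. by apply/matrixP => i j; rewrite !mxE; case: (ord2P i) => ->; case: (ord2P j) => ->. Qed.

Lemma mx2_opp a b c d : - mx2 a b c d = mx2 (- a) (- b) (- c) (- d).
Proof. by apply/matrixP => i j; rewrite !mxE; case: (ord2P i) => ->; case: (ord2P j) => ->. Qed.

Lemma mx2_sub a b c d a' b' c' d' :
  mx2 a b c d - mx2 a' b' c' d' = mx2 (a - a') (b - b') (c - c') (d - d').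
Proof. by rewrite mx2_opp mx2_add. Qed.

Lemma mx2_0 : 0 = mx2 0 0 0 0.
Proof. by apply/matrixP => i j; rewrite !mxE; case: (ord2P i) => ->; case: (ord2P j) => ->. Qed.

Lemma mx2_1 : 1%:M = mx2 1 0 0 1.
Proof. by apply/matrixP => i j; rewrite !mxE; case: (ord2P i) => ->; case: (ord2P j) => ->. Qed.

End TwoByTwo.

Section Unitary.
Variables (E : fieldType) (sigma : {rmorphism E -> E}).
Hypothesis sigmaK : involutive sigma.
Local Notation mx2 := (@mx2 E).
Local Notation adj := (adj sigma).
Local Notation w := (w E).
Local Notation inG := (inG sigma).

Definition uinv (g : 'M[E]_2) := w *m adj g *m w.

Definition in_lieG (Y : 'M[E]_2) : Prop := adj Y *m w + w *m Y = 0.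

Lemma adj_mx2 a b c d : adj (mx2 a b c d) = mx2 (sigma a) (sigma c) (sigma b) (sigma d).
Proof. by apply/matrixP => i j; rewrite !mxE; case: (ord2P i) => ->; case: (ord2P j) => ->. Qed.

Lemma adjM (A B : 'M[E]_2) : adj (A *m B) = adj B *m adj A.
Proof. by rewrite /Defs.adj map_mxM trmx_mul. Qed.

Lemma adjB (A B : 'M[E]_2) : adj (A - B) = adj A - adj B.
Proof. by rewrite /Defs.adj map_mxB linearB. Qed.

Lemma adjK : involutive adj.
Proof. by move=> A; apply/matrixP => i j; rewrite !mxE sigmaK. Qed.

Lemma adjw : adj w = w.
Proof. by rewrite /Defs.w adj_mx2 rmorph0 rmorph1. Qed.

Lemma mulww : w *m w = 1%:M.
Proof. by rewrite /Defs.w mx2_mul mx2_1 !mul0r !mulr0 !mul1r !add0r !addr0. Qed.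

Lemma uinv_l g : inG g -> uinv g *m g = 1%:M.
Proof. by move=> hg; rewrite /uinv -!mulmxA (mulmxA (adj g)) hg mulww. Qed.

Lemma uinv_r g : inG g -> g *m uinv g = 1%:M.
Proof. by move=> hg; apply: mulmx1C; apply: uinv_l. Qed.

Lemma invmx_unitary g : inG g -> invmx g = uinv g.
Proof.
move=> /uinv_l hg; have [_ ug] := mulmx1_unit hg.
by rewrite -[invmx g]mul1mx -hg -mulmxA mulmxV // mulmx1.
Qed.

Lemma uinvM g h : uinv (g *m h) = uinv h *m uinv g.
Proof. by rewrite /uinv adjM !mulmxA -(mulmxA _ w w) mulww mulmx1. Qed.

Lemma inG_mul g h : inG g -> inG h -> inG (g *m h).
Proof.
move=> hg hh; rewrite /Defs.inG adjM -!mulmxA (mulmxA (adj g)) (mulmxA (adj g *m w)).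
by rewrite hg mulmxA.
Qed.

Lemma inG_uinv g : inG g -> inG (uinv g).
Proof.
move=> hg; rewrite /Defs.inG /uinv !adjM adjK adjw.
have gwg : g *m w *m adj g = w.
  have := congr1 (mulmx^~ w) (uinv_r hg).
  by rewrite mul1mx /uinv -!mulmxA mulww mulmx1 !mulmxA.
by rewrite -!mulmxA (mulmxA w w) mulww mul1mx (mulmxA g) (mulmxA (g *m w)) gwg mulww mulmx1.
Qed.

Lemma in_lieG_conj g Y : inG g -> in_lieG Y -> in_lieG (uinv g *m Y *m g - Y).
Proof.
move=> hg hY; have YwN : adj Y *m w = - (w *m Y) by apply/eqP; rewrite -addr_eq0 hY.
have adj_conj : adj (uinv g *m Y *m g) *m w = adj g *m (adj Y *m w) *m g.
  by rewrite /uinv !adjM adjK adjw !mulmxA -(mulmxA _ w w) mulww mulmx1.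
have w_conj : w *m (uinv g *m Y *m g) = adj g *m (w *m Y) *m g.
  by rewrite /uinv !mulmxA mulww mul1mx.
rewrite /in_lieG adjB mulmxBl mulmxBr adj_conj w_conj YwN mulmxN mulNmx.
by rewrite opprK addrACA addNr subrr addr0.
Qed.

Lemma inG_mx2 a b c d : inG (mx2 a b c d) <->
  [/\ sigma c * a + sigma a * c = 0, sigma c * b + sigma a * d = 1,
      sigma d * a + sigma b * c = 1 & sigma d * b + sigma b * d = 0].
Proof.
rewrite /Defs.inG adj_mx2 /Defs.w !mx2_mul !mulr0 !mulr1 !addr0 !add0r.
by split=> [/mx2_inj [-> -> -> ->] | [-> -> -> ->]].
Qed.

Lemma in_lieG_mx2 a b c d : in_lieG (mx2 a b c d) <->
  [/\ sigma c + c = 0, sigma a + d = 0, sigma d + a = 0 & sigma b + b = 0].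
Proof.
rewrite /in_lieG adj_mx2 /Defs.w !mx2_mul mx2_add !mulr0 !mulr1 !mul0r !mul1r !addr0 !add0r.
rewrite mx2_0; split=> [/mx2_inj [] | [-> -> -> ->]] //.
Qed.

Lemma in_lieG_antidiag U V : sigma U = - U -> sigma V = - V -> in_lieG (mx2 0 U V 0).
Proof. by move=> sU sV; apply/in_lieG_mx2; rewrite sU sV rmorph0 !addr0 !addNr. Qed.

End Unitary.

Section Valuation.
Variables (F : fieldType) (nu : F -> int).
Hypothesis Hnu : is_discrete_valuation nu.
Local Notation pF := (in_pF nu).

Lemma nuM x y : x != 0 -> y != 0 -> nu (x * y) = nu x + nu y.
Proof. by case: Hnu => nuM _ _; apply: nuM. Qed.

Lemma nuD x y : x != 0 -> y != 0 -> x + y != 0 -> Order.min (nu x) (nu y) <= nu (x + y).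
Proof. by case: Hnu => _ nuD _; apply: nuD. Qed.

Lemma nu1 : nu 1 = 0.
Proof. by have := @nuM 1 1 (oner_neq0 _) (oner_neq0 _); rewrite mulr1; lia. Qed.

Lemma nuN x : nu (- x) = nu x.
Proof.
have N1_neq0 : (-1 : F) != 0 by rewrite oppr_eq0 oner_neq0.
have nuN1 : nu (-1) = 0 by have := nuM N1_neq0 N1_neq0; rewrite mulrNN mulr1 nu1; lia.
have [->|x0] := eqVneq x 0; first by rewrite oppr0.
by rewrite -mulN1r nuM // nuN1 add0r.
Qed.

Lemma nuV x : x != 0 -> nu x^-1 = - nu x.
Proof. by move=> x0; have := nuM x0 (invr_neq0 x0); rewrite mulfV // nu1; lia. Qed.

Lemma pF0 n : pF n 0. Proof. by left. Qed.

Lemma pF_le m n x : m <= n -> pF n x -> pF m x.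
Proof. by move=> mn [->|h]; [left | right; apply: le_trans h]. Qed.

Lemma pFD n x y : pF n x -> pF n y -> pF n (x + y).
Proof.
case=> [->|hx]; first by rewrite add0r.
case=> [->|hy]; first by rewrite addr0; right.
have [->|x0] := eqVneq x 0; first by rewrite add0r; right.
have [->|y0] := eqVneq y 0; first by rewrite addr0; right.
have [->|xy0] := eqVneq (x + y) 0; first by left.
by right; apply: le_trans (nuD x0 y0 xy0); rewrite le_min hx hy.
Qed.

Lemma pFN n x : pF n x -> pF n (- x).
Proof. by case=> [->|h]; [rewrite oppr0; left | right; rewrite nuN]. Qed.

Lemma pFB n x y : pF n x -> pF n y -> pF n (x - y).
Proof. by move=> hx hy; apply: pFD hx (pFN hy). Qed.

Lemma pF_subC n x y : pF n (x - y) -> pF n (y - x).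
Proof. by move/pFN; rewrite opprB. Qed.

Lemma pFM m n x y : pF m x -> pF n y -> pF (m + n) (x * y).
Proof.
case=> [->|hx]; first by rewrite mul0r; left.
case=> [->|hy]; first by rewrite mulr0; left.
have [->|x0] := eqVneq x 0; first by rewrite mul0r; left.
have [->|y0] := eqVneq y 0; first by rewrite mulr0; left.
by right; rewrite nuM // lerD.
Qed.

Lemma pFM0 n x y : pF 0 x -> pF n y -> pF n (x * y).
Proof. by move=> hx hy; rewrite -(add0r n); apply: pFM. Qed.

Lemma pF1 : pF 0 1. Proof. by right; rewrite nu1. Qed.

Lemma pF_near n x y : 0 <= n -> pF n (x - y) -> pF 0 y -> pF 0 x.
Proof. by move=> n0 /(pF_le n0) hxy hy; rewrite -(subrK y x); apply: pFD. Qed.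

Lemma pF_eq0 n x : (forall k : nat, pF (n + k%:Z) x) -> x = 0.
Proof. by move=> h; case: (h (absz (nu x + 1 - n)%R)) => //; lia. Qed.

Lemma nuD_small x y : x != 0 -> pF (nu x + 1) y -> x + y != 0 /\ nu (x + y) = nu x.
Proof.
move=> x0 [->|hy]; first by rewrite addr0.
have [->|y0] := eqVneq y 0; first by rewrite addr0.
have xy0 : x + y != 0.
  by apply: contraTneq hy => /eqP; rewrite addr_eq0 => /eqP ->; rewrite nuN; lia.
have Ny0 : - y != 0 by rewrite oppr_eq0.
have xyy0 : x + y - y != 0 by rewrite addrK.
have := nuD x0 y0 xy0; have := nuD xy0 Ny0 xyy0.
by rewrite addrK nuN !ge_min; split => //; lia.
Qed.

Lemma pF_unit x : pF 1 (x - 1) -> x != 0 /\ nu x = 0.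
Proof. by have := @nuD_small 1 (x - 1) (oner_neq0 _); rewrite nu1 add0r [1 + _]addrC subrK. Qed.

Lemma pF_unitV x : pF 1 (x - 1) -> pF 0 x^-1.
Proof. by move=> /pF_unit [x0 nux]; right; rewrite nuV // nux. Qed.

Lemma pF_invr n x : 1 <= n -> pF n (x - 1) -> pF n (x^-1 - 1).
Proof.
move=> n1 h; have [x0 _] := pF_unit (pF_le n1 h).
have -> : x^-1 - 1 = x^-1 * (1 - x) by rewrite mulrBr mulVf // mulr1.
by apply: pFM0; [apply: pF_unitV; apply: pF_le h | apply: pF_subC].
Qed.

Section Complete.
Hypothesis Hcomplete : is_complete nu.

Lemma pF_limit n (x : nat -> F) : (forall k, pF (n + k%:Z) (x k.+1 - x k)) ->
  exists l, forall k, pF (n + k%:Z) (x k - l).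
Proof.
move=> step.
have tail k j : (k <= j)%N -> pF (n + k%:Z) (x j - x k).
  move=> /subnKC <-; elim: (j - k)%N => [|i IH]; first by rewrite addn0 subrr; left.
  have -> : x (k + i.+1)%N - x k = (x (k + i).+1 - x (k + i)%N) + (x (k + i)%N - x k).
    by rewrite addnS addrA subrK.
  by apply: pFD IH; apply: pF_le (step _); lia.
have [l hl] : exists l, forall j, exists N, forall m, (N <= m)%N -> pF j (x m - l).
  apply: Hcomplete => j; exists (absz (j - n)%R) => p q hp hq.
  have -> : x p - x q = (x p - x (absz (j - n)%R)) - (x q - x (absz (j - n)%R)) by ring.
  by apply: pF_le (pFB (tail _ _ hp) (tail _ _ hq)); lia.
exists l => k; have [N hN] := hl (n + k%:Z).
have -> : x k - l = (x (maxn k N) - l) - (x (maxn k N) - x k) by ring.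
by apply: pFB; [apply: hN; apply: leq_maxr | apply: tail; apply: leq_maxl].
Qed.

Hypothesis two_unit : (2%:R : F) != 0 /\ nu 2%:R = 0.

(* Newton's iteration for the square root, [y |-> y - (y^2 - m) / 2], started at 1. *)
Lemma hensel_sqrt n m : 1 <= n -> pF n (m - 1) -> exists l, l ^+ 2 = m /\ pF n (l - 1).
Proof.
move=> n1 hm; have [two0 nu2] := two_unit.
have half : pF 0 (2%:R : F)^-1 by right; rewrite nuV // nu2.
pose f y := y - (y ^+ 2 - m) / 2%:R.
pose x k := iter k f 1.
have newton_inv k : pF n (x k - 1) /\ pF (n + k%:Z) (x k ^+ 2 - m).
  elim: k => [|k [IH1 IH2]].
    by split; [rewrite subrr; left | rewrite expr1n addr0; apply: pF_subC].
  rewrite /x iterS -/(x k) /f; set e := x k ^+ 2 - m in IH2 *.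
  have he : pF (n + k%:Z) (e / 2%:R) by rewrite mulrC; apply: pFM0.
  split.
    have -> : x k - e / 2%:R - 1 = (x k - 1) - e / 2%:R by ring.
    by apply: pFB IH1 (pF_le _ he); lia.
  have -> : (x k - e / 2%:R) ^+ 2 - m = e * ((1 - x k) + e / 2%:R / 2%:R).
    by rewrite /e; field.
  have -> : n + k.+1%:Z = n + k%:Z + 1 by lia.
  apply: pFM IH2 _; apply: pFD; first by apply: pF_subC; apply: pF_le IH1; lia.
  by rewrite mulrC; apply: pFM0 half _; apply: pF_le he; lia.
have step k : pF (n + k%:Z) (x k.+1 - x k).
  rewrite /x iterS -/(x k) /f addrAC subrr add0r; apply: pFN.
  by rewrite mulrC; apply: pFM0 half _; case: (newton_inv k).
have [l hl] := pF_limit step.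
have hl1 : pF n (l - 1) by apply: pF_subC; have := hl 0%N; rewrite addr0.
exists l; split => //.
apply/eqP; rewrite -subr_eq0; apply/eqP; apply: (@pF_eq0 n) => k.
have -> : l ^+ 2 - m = (x k ^+ 2 - m) - (x k - l) * (x k + l) by ring.
apply: pFB; first by case: (newton_inv k).
have n0 : 0 <= n by lia.
rewrite -(addr0 (n + k%:Z)); apply: pFM (hl k) _.
by apply: pFD; apply: (pF_near n0) pF1; [case: (newton_inv k) | ].
Qed.

End Complete.

Section QuadraticExtension.
Variables (eps : F) (E : fieldType) (iota : {rmorphism F -> E}) (se : E)
  (sigma : {rmorphism E -> E}).
Hypothesis HE : unramified_quadratic nu eps iota se sigma.
Local Notation pE := (in_pE nu iota se).

Lemma se2 : se ^+ 2 = iota eps. Proof. by case: HE. Qed.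
Lemma pF_eps : pF 0 eps. Proof. by case: HE => [[_ nue] _ _ _ _]; right; rewrite nue. Qed.
Lemma coords z : exists a b : F, z = iota a + iota b * se. Proof. by case: HE. Qed.
Lemma sigma_iota a : sigma (iota a) = iota a. Proof. by case: HE => _ _ _ _ []. Qed.
Lemma sigma_se : sigma se = - se. Proof. by case: HE => _ _ _ _ []. Qed.

Lemma sigma_iota_se a : sigma (iota a * se) = - (iota a * se).
Proof. by rewrite rmorphM sigma_iota sigma_se mulrN. Qed.

Lemma coords_inj a b c d :
  iota a + iota b * se = iota c + iota d * se -> a = c /\ b = d.
Proof.
move=> e; have [bd|bd] := eqVneq b d.
  by subst; split => //; apply: (fmorph_inj iota); move/addIr: e.
case: HE => _ eps_nsq _ _ _; exfalso; apply: eps_nsq.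
have se_ratio : iota (c - a) = se * iota (b - d).
  rewrite !rmorphB; transitivity (iota c + iota d * se - (iota a + iota d * se)); first ring.
  by rewrite -e; ring.
have bd0 : iota (b - d) != 0 by rewrite fmorph_eq0 subr_eq0.
exists ((c - a) / (b - d)); apply: (fmorph_inj iota).
by rewrite rmorphXn fmorph_div se_ratio mulfK // se2.
Qed.

Lemma sigma_coords a b : sigma (iota a + iota b * se) = iota a - iota b * se.
Proof. by rewrite rmorphD rmorphM /= !sigma_iota sigma_se mulrN. Qed.

Lemma sigmaK : involutive sigma.
Proof.
move=> z; have [a [b ->]] := coords z.
by rewrite sigma_coords rmorphB rmorphM /= !sigma_iota sigma_se mulrN opprK.
Qed.

Lemma pE_coords n a b : pE n (iota a + iota b * se) <-> pF n a /\ pF n b.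
Proof.
split=> [[a' [b' [/coords_inj [-> ->] //]]] | [ha hb]].
by exists a, b.
Qed.

Lemma pE_iota n a : pE n (iota a) <-> pF n a.
Proof.
rewrite -[iota a]addr0 -(mul0r se) -(rmorph0 iota) pE_coords.
by split=> [[] | ha] //; split => //; apply: pF0.
Qed.

Lemma pE_iota_se n b : pE n (iota b * se) <-> pF n b.
Proof.
rewrite -[_ * se]add0r -(rmorph0 iota) pE_coords.
by split=> [[] | hb] //; split => //; apply: pF0.
Qed.

Lemma pE0 n : pE n 0. Proof. by rewrite -(rmorph0 iota) pE_iota; apply: pF0. Qed.
Lemma pE1 : pE 0 1. Proof. by rewrite -(rmorph1 iota) pE_iota; apply: pF1. Qed.

Lemma iota_se_neq0 u : u != 0 -> iota u * se != 0.
Proof.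
case: HE => [[eps0 _] _ _ _ _] u0; rewrite mulf_neq0 ?fmorph_eq0 //.
by apply: contraNneq eps0 => se0; rewrite -(fmorph_eq0 iota) -se2 se0 expr0n.
Qed.

Lemma unit_se_inv u : u != 0 -> nu u = 0 -> pE 0 (iota u * se)^-1.
Proof.
case: HE => [[eps0 nueps] _ _ _ _] u0 nuu.
have -> : (iota u * se)^-1 = iota (u^-1 / eps) * se.
  apply: mulr1_eq; rewrite mulrACA -expr2 se2 -!rmorphM.
  have -> : u * (u^-1 / eps) * eps = 1 by field; apply/andP.
  exact: rmorph1.
apply/pE_iota_se; rewrite -[0]addr0; apply: pFM; right.
  by rewrite nuV // nuu.
by rewrite nuV // nueps.
Qed.

Lemma pE_le m n z : m <= n -> pE n z -> pE m z.
Proof.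
by move=> mn [a [b [-> [ha hb]]]]; apply/pE_coords; split; apply: pF_le mn _.
Qed.

Lemma pED n y z : pE n y -> pE n z -> pE n (y + z).
Proof.
move=> [a [b [-> [ha hb]]]] [c [d [-> [hc hd]]]].
exists (a + c), (b + d); split; last by split; apply: pFD.
by rewrite !rmorphD /=; ring.
Qed.

Lemma pEN n z : pE n z -> pE n (- z).
Proof.
move=> [a [b [-> [ha hb]]]]; exists (- a), (- b); split; last by split; apply: pFN.
by rewrite !rmorphN /=; ring.
Qed.

Lemma pEB n y z : pE n y -> pE n z -> pE n (y - z).
Proof. by move=> hy hz; apply: pED hy (pEN hz). Qed.

Lemma pE_subC n y z : pE n (y - z) -> pE n (z - y).
Proof. by move/pEN; rewrite opprB. Qed.

Lemma pEM m n y z : pE m y -> pE n z -> pE (m + n) (y * z).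
Proof.
move=> [a [b [-> [ha hb]]]] [c [d [-> [hc hd]]]].
have -> : (iota a + iota b * se) * (iota c + iota d * se) =
    iota (a * c + eps * (b * d)) + iota (a * d + b * c) * se.
  by rewrite !rmorphD !rmorphM /= -se2; ring.
apply/pE_coords; split; last by apply: pFD; apply: pFM.
by apply: pFD; [apply: pFM | apply: pFM0 pF_eps (pFM _ _)].
Qed.

Lemma pEM0 n y z : pE 0 y -> pE n z -> pE n (y * z).
Proof. by move=> hy hz; rewrite -(add0r n); apply: pEM. Qed.

Lemma pEMr0 n y z : pE n y -> pE 0 z -> pE n (y * z).
Proof. by move=> hy hz; rewrite -(addr0 n); apply: pEM. Qed.

Lemma pE_sigma n z : pE n z -> pE n (sigma z).
Proof.
move=> [a [b [-> [ha hb]]]]; rewrite sigma_coords -mulNr -rmorphN.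
by apply/pE_coords; split => //; apply: pFN.
Qed.

Lemma pE_near n y z : 0 <= n -> pE n (y - z) -> pE 0 z -> pE 0 y.
Proof. by move=> n0 /(pE_le n0) hyz hz; rewrite -(subrK z y); apply: pED. Qed.

Lemma normP z : pE 0 z -> exists2 q, sigma z * z = iota q & pF 0 q.
Proof.
move=> [a [b [-> [ha hb]]]]; exists (a ^+ 2 - eps * b ^+ 2).
  by rewrite sigma_coords rmorphB !rmorphM -se2; ring.
by apply: pFB; [apply: pFM0 | apply: pFM0 pF_eps (pFM0 _ _)].
Qed.

Lemma in_se_pF_pE n z : in_se_pF nu iota se n z -> pE n z.
Proof. by move=> [b [-> hb]]; apply/pE_iota_se. Qed.

Definition mx_pE n (M : 'M[E]_2) : Prop := forall i j, pE n (M i j).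

Lemma mx_pE_mx2 n a b c d : pE n a -> pE n b -> pE n c -> pE n d -> mx_pE n (mx2 a b c d).
Proof. by move=> ha hb hc hd i j; case: (ord2P i) => ->; case: (ord2P j) => ->; rewrite mx2E. Qed.

Lemma mx_pEB n M N : mx_pE n M -> mx_pE n N -> mx_pE n (M - N).
Proof. by move=> hM hN i j; rewrite !mxE; apply: pEB. Qed.

Lemma mx_pEM m n M N : mx_pE m M -> mx_pE n N -> mx_pE (m + n) (M *m N).
Proof.
move=> hM hN i j; rewrite mxE; apply: big_ind; [exact: pE0 | exact: pED |].
by move=> l _; apply: pEM.
Qed.

Lemma mx_pEM0 n M N : mx_pE 0 M -> mx_pE n N -> mx_pE n (M *m N).
Proof. by move=> hM hN; rewrite -(add0r n); apply: mx_pEM. Qed.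

Lemma mx_pEMr0 n M N : mx_pE n M -> mx_pE 0 N -> mx_pE n (M *m N).
Proof. by move=> hM hN; rewrite -(addr0 n); apply: mx_pEM. Qed.

Lemma mx_pE_w : mx_pE 0 (w E).
Proof. by apply: mx_pE_mx2; (exact: pE0 || exact: pE1). Qed.

Lemma mx_pE_uinv n g : mx_pE n g -> mx_pE n (uinv sigma g).
Proof.
move=> hg; apply: mx_pEMr0 mx_pE_w; apply: mx_pEM0 mx_pE_w _.
by move=> i j; rewrite !mxE; apply: pE_sigma.
Qed.

Lemma skew_in_se_pF n z : (2%:R : F) != 0 -> sigma z + z = 0 -> pE n z ->
  in_se_pF nu iota se n z.
Proof.
move=> two0 skz [a [b [ez [_ hb]]]]; exists b; split => //.
have a2 : iota (a * 2%:R) = 0 by rewrite rmorphM rmorph_nat -skz ez sigma_coords; ring.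
have /eqP : a * 2%:R = 0 by apply: (fmorph_inj iota); rewrite a2 rmorph0.
by rewrite mulf_eq0 (negPf two0) orbF => /eqP a0; rewrite ez a0 rmorph0 add0r.
Qed.

Lemma in_liekn_iff n Y : (2%:R : F) != 0 -> 0 <= n ->
  in_liekn nu iota se sigma n Y <-> in_lieG sigma Y /\ mx_pE n Y.
Proof.
move=> two0 n0; split.
  move=> [[skY _] h00 h11 h01 h10]; split => // i j.
  by case: (ord2P i) => ->; case: (ord2P j) => -> //; apply: in_se_pF_pE.
move=> [skY hY].
have /in_lieG_mx2 [sk10 _ _ sk01] := eq_ind _ (in_lieG sigma) skY _ (mx2_eta Y).
split; [split=> // i j; exact: pE_le n0 (hY i j) | exact: hY | exact: hY | |].
  exact: skew_in_se_pF two0 sk01 (hY _ _).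
exact: skew_in_se_pF two0 sk10 (hY _ _).
Qed.

Lemma mx_pE_conj_sub n X c g : 0 <= n -> mx_pE 0 X -> inG sigma c -> c *m X = X *m c ->
  inKn nu iota se sigma n g -> mx_pE n (uinv sigma (c *m g) *m X *m (c *m g) - X).
Proof.
move=> n0 hX hc cX [hg hg1].
have hg0 : mx_pE 0 g.
  move=> i j; apply: (pE_near n0 (y := g i j) (z := (1%:M : 'M[E]_2) i j)).
    by have := hg1 i j; rewrite !mxE.
  by rewrite mxE; case: (i == j); [apply: pE1 | apply: pE0].
have -> : uinv sigma (c *m g) *m X *m (c *m g) - X =
    uinv sigma g *m (X *m (g - 1%:M) - (g - 1%:M) *m X).
  have cXc : uinv sigma c *m X *m c = X by rewrite -mulmxA -cX mulmxA uinv_l // mul1mx.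
  have -> : uinv sigma (c *m g) *m X *m (c *m g) = uinv sigma g *m (uinv sigma c *m X *m c) *m g.
    by rewrite uinvM !mulmxA.
  rewrite cXc !mulmxBl !mulmxBr mulmx1 mul1mx !mulmxA uinv_l // mul1mx.
  by rewrite opprB addrA subrK.
apply: mx_pEM0 (mx_pE_uinv hg0) _.
by apply: mx_pEB; [apply: mx_pEM0 hX hg1 | apply: mx_pEMr0 hg1 hX].
Qed.

Lemma inT_mx2 U r A B : pE 0 (iota r) -> pE 0 A -> pE 0 B ->
  sigma A * A + iota r * (sigma B * B) = 1 -> sigma A * B + sigma B * A = 0 ->
  inT nu iota se sigma (mx2 0 U (U * iota r) 0) (mx2 A B (iota r * B) A).
Proof.
move=> hr hA hB eN eT; split; last by rewrite !mx2_mul; congr mx2; ring.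
split; last by apply: mx_pE_mx2 => //; apply: pEM0.
apply/inG_mx2; rewrite rmorphM sigma_iota.
split; [| by rewrite -eN; ring | by rewrite -eN; ring | exact: eT].
by transitivity (iota r * (sigma A * B + sigma B * A)); [ring | rewrite eT mulr0].
Qed.

Lemma near_centralizer_relations n U r a b c d :
  U != 0 -> pE 0 U^-1 -> pE 0 (iota r) -> pE 0 a -> pE 0 b -> inG sigma (mx2 a b c d) ->
  mx_pE n (mx2 0 U (U * iota r) 0 *m mx2 a b c d - mx2 a b c d *m mx2 0 U (U * iota r) 0) ->
  [/\ pE n (c - iota r * b), pE n (d - a),
      pE n (sigma a * a + iota r * (sigma b * b) - 1) & pE n (sigma a * b + sigma b * a)].
Proof.
move=> U0 hUi hr ha hb /inG_mx2 [_ _ e3 e4] hcomm.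
have [h00 h01] : pE n (U * c - b * (U * iota r)) /\ pE n (U * d - a * U).
  by split; [have := hcomm ord0 ord0 | have := hcomm ord0 ord_max];
     rewrite !mx2_mul mx2_sub !mx2E !mul0r !mulr0 ?add0r ?addr0.
have hcb : pE n (c - iota r * b).
  have -> : c - iota r * b = U^-1 * (U * c - b * (U * iota r)) by field.
  exact: pEM0 hUi h00.
have hda : pE n (d - a).
  have -> : d - a = U^-1 * (U * d - a * U) by field.
  exact: pEM0 hUi h01.
have had : pE n (a - d) by apply: pE_subC.
split => //.
  have -> : sigma a * a + iota r * (sigma b * b) - 1 =
      sigma (a - d) * a + sigma b * (iota r * b - c) + (sigma d * a + sigma b * c - 1).
    by rewrite rmorphB; ring.
  rewrite e3 subrr addr0; apply: pED; first exact: pEMr0 (pE_sigma had) ha.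
  by apply: pEM0 (pE_sigma hb) (pE_subC hcb).
have -> : sigma a * b + sigma b * a =
    sigma (a - d) * b + sigma b * (a - d) + (sigma d * b + sigma b * d).
  by rewrite rmorphB; ring.
by rewrite e4 addr0; apply: pED; [apply: pEMr0 (pE_sigma had) hb | apply: pEM0 (pE_sigma hb) had].
Qed.

Section LocalField.
Hypothesis Hcomplete : is_complete nu.
Hypothesis two_unit : (2%:R : F) != 0 /\ nu 2%:R = 0.

(* With [w = b / a = x + y se], the trace [sigma a * b + sigma b * a] equals [2 q x]. *)
Lemma unit_mul_decomp n a b q : pE 0 a -> pE 0 b ->
  sigma a * a = iota q -> pF 1 (q - 1) -> pE n (sigma a * b + sigma b * a) ->
  exists x y, [/\ b = a * (iota x + iota y * se), pF n x & pF 0 y].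
Proof.
move=> ha hb hq hq1 htr; have [q0 _] := pF_unit hq1.
pose wv := sigma a * b * iota q^-1.
have [x [y ewv]] := coords wv.
have [_ hy] : pF 0 x /\ pF 0 y.
  apply/pE_coords; rewrite -ewv; apply: pEMr0; first exact: pEM0 (pE_sigma ha) hb.
  by apply/pE_iota; apply: pF_unitV.
have qV : iota q * iota q^-1 = 1 by rewrite -rmorphM mulfV // rmorph1.
exists x, y; split => //; first by rewrite -ewv /wv; ring: hq qV.
have x2 : iota (x * 2%:R) = (sigma a * b + sigma b * a) * iota q^-1.
  have swv : sigma wv = sigma b * a * iota q^-1.
    by rewrite /wv !rmorphM /= sigmaK sigma_iota; ring.
  transitivity (wv + sigma wv); first by rewrite ewv sigma_coords rmorphM rmorph_nat; ring.
  by rewrite swv /wv; ring.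
have hx2 : pF n (x * 2%:R * q).
  by apply/pE_iota; rewrite rmorphM x2 -mulrA -rmorphM mulVf // rmorph1 mulr1.
have [two0 nu2] := two_unit.
have -> : x = (2%:R)^-1 * (x * 2%:R * q) * q^-1 by field; apply/andP.
by rewrite -(addr0 n); apply: pFM; [apply: pFM0 hx2; right; rewrite nuV // nu2 | apply: pF_unitV].
Qed.

(* With [b = a (x + y se)], rescaling [a] and [a y se] by [lam = (N a (1 - r eps y^2))^(-1/2)],
   a principal unit by Hensel, solves both equations exactly. *)
Lemma unitary_lift n r a b : 1 <= n -> pF 1 r -> pE 0 a -> pE 0 b ->
  pE n (sigma a * a + iota r * (sigma b * b) - 1) -> pE n (sigma a * b + sigma b * a) ->
  exists A B, [/\ sigma A * A + iota r * (sigma B * B) = 1, sigma A * B + sigma B * A = 0,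
                  pE n (A - a) & pE n (B - b)].
Proof.
move=> n1 hr ha hb hnorm htr; have n0 : 0 <= n by lia.
have [q hq hq0] := normP ha; have [qb hqb hqb0] := normP hb.
have hq1 : pF 1 (q - 1).
  apply/(pE_iota 1); rewrite rmorphB rmorph1 -hq.
  have -> : sigma a * a - 1 = (sigma a * a + iota r * (sigma b * b) - 1) - iota (r * qb).
    by rewrite rmorphM hqb; ring.
  by apply: pEB (pE_le n1 hnorm) _; apply/pE_iota; rewrite -(addr0 1); apply: pFM.
have [x [y [eb hx hy]]] := unit_mul_decomp ha hb hq hq1 htr.
set N := q * (1 - r * (eps * y ^+ 2)).
have hN : pF n (N - 1).
  apply/(pE_iota n).
  have -> : iota (N - 1) = (sigma a * a + iota r * (sigma b * b) - 1) - iota (r * q * x ^+ 2).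
    by rewrite eb rmorphM sigma_coords !rmorphB !rmorphM rmorph1; ring: hq se2.
  have hr0 : pF 0 r by apply: pF_le hr.
  apply: pEB hnorm _; apply/pE_iota; rewrite -[n]add0r.
  by apply: pFM; [apply: pFM0 hr0 hq0 | apply: pFM0 (pF_le n0 hx) hx].
have [l [l2 hl1]] := hensel_sqrt Hcomplete two_unit n1 hN.
have [l0 _] := pF_unit (pF_le n1 hl1).
set lam := l^-1; have hlam := pF_invr n1 hl1.
have lamN : iota lam ^+ 2 * iota N = 1.
  by rewrite -rmorphXn -rmorphM /lam -l2 exprVn mulVf ?rmorph1 // expf_neq0.
exists (iota lam * a), (iota lam * a * (iota y * se)); split.
- rewrite !rmorphM !sigma_iota sigma_se -lamN /N !rmorphM !rmorphB rmorph1.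
  by ring: hq se2.
- by rewrite !rmorphM !sigma_iota sigma_se; ring.
- have -> : iota lam * a - a = iota (lam - 1) * a by rewrite rmorphB rmorph1; ring.
  by apply: pEMr0 ha; apply/pE_iota.
have -> : iota lam * a * (iota y * se) - b = iota (lam - 1) * (a * (iota y * se)) - a * iota x.
  by rewrite eb rmorphB rmorph1; ring.
apply: pEB; last by apply: pEM0 ha _; apply/pE_iota.
rewrite -[n]addr0; apply: pEM; first by apply/pE_iota.
by apply: pEM0 ha _; apply/pE_iota_se.
Qed.

Lemma centralizer_Kn_decomp n U r k : 1 <= n -> U != 0 -> pE 0 U^-1 -> pF 1 r ->
  inK nu iota se sigma k ->
  mx_pE n (uinv sigma k *m mx2 0 U (U * iota r) 0 *m k - mx2 0 U (U * iota r) 0) ->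
  exists2 c, inT nu iota se sigma (mx2 0 U (U * iota r) 0) c &
             inKn nu iota se sigma n (uinv sigma c *m k).
Proof.
set X := mx2 0 U _ 0 => n1 U0 hUi hr [hkG hk] hY.
have hr0 : pE 0 (iota r) by apply/pE_iota; apply: pF_le hr.
have hcomm : mx_pE n (X *m k - k *m X).
  have -> : X *m k - k *m X = k *m (uinv sigma k *m X *m k - X).
    by rewrite mulmxBr (mulmxA k (uinv sigma k *m X)) (mulmxA k (uinv sigma k)) uinv_r // mul1mx.
  exact: mx_pEM0 hk hY.
move: hkG hcomm; rewrite [k]mx2_eta; set a := k _ _; set b := k _ _; set c := k _ _; set d := k _ _.
move=> hkG hcomm.
have [hcb hda hnorm htr] := near_centralizer_relations U0 hUi hr0 (hk _ _) (hk _ _) hkG hcomm.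
have [A [B [eN eT hA hB]]] := unitary_lift n1 hr (hk _ _) (hk _ _) hnorm htr.
have n0 : 0 <= n by lia.
have hc0 := inT_mx2 U hr0 (pE_near n0 hA (hk _ _)) (pE_near n0 hB (hk _ _)) eN eT.
exists (mx2 A B (iota r * B) A) => //; have [[hc0G hc0K] _] := hc0.
split; first exact: inG_mul (inG_uinv sigmaK hc0G) hkG.
have -> : uinv sigma (mx2 A B (iota r * B) A) *m mx2 a b c d - 1%:M =
    uinv sigma (mx2 A B (iota r * B) A) *m (mx2 a b c d - mx2 A B (iota r * B) A).
  by rewrite mulmxBr uinv_l.
apply: mx_pEM0 (mx_pE_uinv hc0K) _; rewrite mx2_sub.
apply: mx_pE_mx2; [exact: pE_subC hA | exact: pE_subC hB | |].
  have -> : c - iota r * B = (c - iota r * b) + iota r * (b - B) by ring.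
  exact: pED hcb (pEM0 hr0 (pE_subC hB)).
have -> : d - A = (d - a) + (a - A) by rewrite addrA subrK.
exact: pED hda (pE_subC hA).
Qed.

End LocalField.

End QuadraticExtension.

End Valuation.

Theorem lemma5p4 (F : fieldType) (nu : F -> int) (eps : F)
  (E : fieldType) (iota : {rmorphism F -> E}) (se : E)
  (sigma : {rmorphism E -> E}) (R : realType)
  (HF : nonarch_local_field_odd nu)
  (HE : unramified_quadratic nu eps iota se sigma)
  (u v : F) (hu : u != 0 /\ nu u = 0) (hv : v != 0 /\ 0 < nu v)
  (s : R) (hs : 0 < s) (k : 'M[E]_2) (hk : inK nu iota se sigma k) :
  let X := mx2 0 (iota u * se) (iota v * se) 0 in
  in_liekn nu iota se sigma (Num.ceil s) (invmx k *m X *m k - X) <->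
  exists c g : 'M[E]_2,
    [/\ inT nu iota se sigma X c, inKn nu iota se sigma (Num.ceil s) g & k = c *m g].
Proof.
move=> X; case: HF => Hnu Hcomplete _ two_unit.
case: hu => u0 nuu; case: hv => v0 nuv.
have n1 : 1 <= Num.ceil s by have := ceil_gt0 s; rewrite hs; lia.
have n0 : 0 <= Num.ceil s by lia.
rewrite (invmx_unitary hk.1) (in_liekn_iff HE _ two_unit.1 n0); split.
  move=> [_ hY]; have hr : in_pF nu 1 (v / u) by right; rewrite nuM ?invr_eq0 // nuV // nuu; lia.
  have eX : X = mx2 0 (iota u * se) (iota u * se * iota (v / u)) 0.
    by rewrite /X mulrAC -rmorphM [u * _]mulrC divfK.
  rewrite eX in hY *.
  have [c hc hg] := centralizer_Kn_decomp Hnu HE Hcomplete two_unit n1 (iota_se_neq0 HE u0)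
    (unit_se_inv Hnu HE u0 nuu) hr hk hY.
  by exists c, (uinv sigma c *m k); rewrite mulmxA uinv_r ?mul1mx //; case: hc => [[]].
move=> [c [g [[[hcG _] cX] hg ->]]]; split.
  apply: (in_lieG_conj (sigmaK HE)); first by apply: inG_mul hcG _; case: hg.
  exact: in_lieG_antidiag (sigma_iota_se HE u) (sigma_iota_se HE v).
have hX : mx_pE nu iota se 0 X.
  by apply: mx_pE_mx2; [exact: (pE0 HE) | apply/(pE_iota_se HE); right; lia
    | apply/(pE_iota_se HE); right; lia | exact: (pE0 HE)].
exact: (mx_pE_conj_sub Hnu HE n0 hX hcG cX hg).
Qed.
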